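(* Let $D$ be a connected ribbon with an odd number of boxes such that $D\notin\mathfrak B$. If the length of $D$ is even, then $\mathfrak r_D$ is not $p$-positive.
   Context: A connected ribbon $D$ of composition $(\alpha_1,\dots,\alpha_\ell)$ has $\alpha_r$ consecutive boxes in row $r$ (rows numbered top to bottom), with the leftmost box of row $r$ directly above the rightmost box of row $r+1$; $\ell$ is its length. $D^t$ is the transpose and $D^\circ$ the rotation by 180 degrees. $\mathfrak r_D=\sum_T x^{c(T)}$ over fillings $T$ of $D$ with letters of $\{1'<1<2'<2<\cdots\}$ having rows and columns weakly increasing, at most one unmarked $k$ per column and at most one marked $k'$ per row; $c(T)_i$ counts entries $i$ or $i'$. $\triangle_{n,k}$ is the ribbon of composition $(1^{k-1},n-k+1)$. $\mathfrak B=\bigcup_n\mathfrak B_n$ with $\mathfrak B_n=\{\triangle_{n,1},\triangle_{n,1}^t,\triangle_{n,3},\triangle_{n,3}^t,\triangle_{n,3}^\circ,(\triangle_{n,3}^t)^\circ\}$ (only the first two when $n\le 2$). A symmetric function is $p$-positive if all its coefficients in the power sum basis are nonnegative. *)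

From HB Require Import structures.
From mathcomp Require Import all_boot all_order all_algebra.
Set Implicit Arguments. Unset Strict Implicit. Unset Printing Implicit Defensive.
Import Order.TTheory GRing.Theory Num.Theory.

(* A connected ribbon is given by its composition
   alpha = [:: alpha_1; ...; alpha_l]  (all parts positive).
   Cells are pairs (row, column), rows numbered 0,1,... from top to bottom,
   columns increasing to the right (English convention).
   Row r starts at column  start alpha r = sum_{s > r} (alpha_s - 1),
   so that the leftmost box of row r is directly above the rightmost box
   of row r+1, and the bottom row starts at column 0. *)

Definition composition (alpha : seq nat) : bool := all (fun a => 0 < a) alpha.

Definition row_start (alpha : seq nat) (r : nat) : nat :=
  sumn [seq a.-1 | a <- drop r.+1 alpha].

Definition cells (alpha : seq nat) : seq (nat * nat) :=
  flatten [seq [seq (r, row_start alpha r + j) | j <- iota 0 (nth 0 alpha r)]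
          | r <- iota 0 (size alpha)].

Definition transp (X : seq (nat * nat)) : seq (nat * nat) :=
  [seq (p.2, p.1) | p <- X].

(* rotation by 180 degrees (all coordinates are < size X for ribbons) *)
Definition rot180 (X : seq (nat * nat)) : seq (nat * nat) :=
  [seq (size X - p.1, size X - p.2) | p <- X].

Definition shift (a b : nat) (X : seq (nat * nat)) : seq (nat * nat) :=
  [seq (p.1 + a, p.2 + b) | p <- X].

Definition same_shape (X Y : seq (nat * nat)) : Prop :=
  exists a b a' b', forall p, (p \in shift a b X) = (p \in shift a' b' Y).

Definition tri (n k : nat) : seq nat := nseq k.-1 1 ++ [:: n - k + 1].

Definition in_Bn (m : nat) (X : seq (nat * nat)) : Prop :=
  [\/ same_shape X (cells (tri m 1)),
      same_shape X (transp (cells (tri m 1))) |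
      2 < m /\
      [\/ same_shape X (cells (tri m 3)),
          same_shape X (transp (cells (tri m 3))),
          same_shape X (rot180 (cells (tri m 3))) |
          same_shape X (rot180 (transp (cells (tri m 3))))]].

Definition in_B (alpha : seq nat) : Prop :=
  exists m, 0 < m /\ in_Bn m (cells alpha).

(* Fillings with letters 1' < 1 < 2' < 2 < ... < N' < N, encoded by codes
   0 < 1 < 2 < ... < 2N-1: code l stands for the letter with value l./2 + 1,
   marked iff l is even. *)

Definition marked (l : nat) : bool := ~~ odd l.

Section Fillings.
Variables (alpha : seq nat) (N : nat).

Definition cell (i : nat) : nat * nat := nth (0, 0) (cells alpha) i.

Definition filling := {ffun 'I_(size (cells alpha)) -> 'I_(2 * N)}.

Definition valid_filling (T : filling) : bool :=
  [forall i : 'I_(size (cells alpha)), forall j : 'I_(size (cells alpha)),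
     [&& ((cell i).1 == (cell j).1) && ((cell i).2 <= (cell j).2) ==> (T i <= T j),
         ((cell i).2 == (cell j).2) && ((cell i).1 <= (cell j).1) ==> (T i <= T j),
         [&& i != j, (cell i).2 == (cell j).2, T i == T j :> nat & ~~ marked (T i)]
           ==> false &
         [&& i != j, (cell i).1 == (cell j).1, T i == T j :> nat & marked (T i)]
           ==> false]].

(* c(T)_k (0-indexed variable k) = number of entries k+1 or (k+1)' *)
Definition content (T : filling) (k : 'I_N) : nat :=
  #|[set i | (T i : nat)./2 == k]|.

(* coefficient of x^c in r_D(x_1,...,x_N) *)
Definition rD_coeff (c : 'I_N -> nat) : nat :=
  #|[set T : filling | valid_filling T && [forall k, content T k == c k]]|.

End Fillings.

(* Power sums.  Coefficient of x^c in p_lambda(x_1,...,x_N):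
   p_lambda = prod_i (sum_j x_j^{lambda_i}) = sum over f : parts -> variables. *)
Definition p_coeff (lam : seq nat) (N : nat) (c : 'I_N -> nat) : nat :=
  #|[set f : {ffun 'I_(size lam) -> 'I_N} |
      [forall j : 'I_N, \sum_(i | f i == j) nth 0 lam i == c j]]|.

(* Partitions of n, encoded as nonincreasing n-tuples with entries <= n
   summing to n (padded with zeros). *)
Definition is_part (n : nat) (t : n.-tuple 'I_n.+1) : bool :=
  sorted geq (map val t) && (sumn (map val t) == n).

Definition part_of (n : nat) (t : n.-tuple 'I_n.+1) : seq nat :=
  [seq x <- map val t | x != 0].

(* A homogeneous symmetric function F of degree n, given by its monomial
   coefficients in every finite number N of variables (F N c = coefficient
   of x^c in F(x_1,...,x_N)), is p-positive iff it is a nonnegative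
   (rational) combination of the power sums p_lambda, lambda |- n. *)
Definition p_positive (n : nat) (F : forall N : nat, ('I_N -> nat) -> nat) : Prop :=
  exists coef : n.-tuple 'I_n.+1 -> rat,
    (forall t, is_part t -> 0 <= coef t)%R /\
    forall (N : nat) (c : 'I_N -> nat),
      ((F N c)%:R = \sum_(t | is_part t) coef t * (p_coeff (part_of t) c)%:R)%R.

From Pilot Require Import Defs.
From mathcomp Require Import all_boot all_order all_algebra.
From mathcomp Require Import ring lra zify.
Set Implicit Arguments. Unset Strict Implicit. Unset Printing Implicit Defensive.
Import Order.TTheory GRing.Theory Num.Theory.

(* Specialise to two variables x1, x2 and apply the linear functional
     L(F) = sum_a  a (-1)^a [x1^a x2^(n-a)] F.
   - Power sums: p_lam(x1, x2) = sum_f x1^(m_f) x2^(n-m_f), over the maps f from the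
     parts of lam to {1, 2}, m_f being the total of the parts sent to 1.  For n odd,
     sum_f m_f (-1)^(m_f) = - sum_i lam_i prod_(j <> i) (1 + (-1)^(lam_j)) <= 0, so
     L(F) <= 0 for every p-positive F of degree n.
   - Ribbons: the fillings of D use the letters 1' < 1 < 2' < 2.  Building D from
     one box by lengthening the top row or adding a one-box row on top, the signed
     counts of fillings grouped by the letter of the top-right box obey linear
     transfer rules.  Induction gives closed forms, and L(r_D) =
     -(-1)^(l-1) - (-1)^(n-l) = 2 > 0 when l is even and n is odd. *)

Definition top_row (c a : nat) : seq (nat * nat) := [seq (0, c + j) | j <- iota 0 a].

Definition shift_down (X : seq (nat * nat)) : seq (nat * nat) :=
  [seq (p.1.+1, p.2) | p <- X].

(* Column of the rightmost box of the ribbon of composition [b]; the row put on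
   top of this ribbon starts in this column. *)
Definition last_col (b : seq nat) : nat := sumn [seq x.-1 | x <- b].

Lemma cells_cons a b : cells (a :: b) = top_row (last_col b) a ++ shift_down (cells b).
Proof.
rewrite /cells /=; congr (_ ++ _); first by rewrite /top_row /row_start /= drop0.
rewrite (iotaDl 1 0); elim: (iota 0 (size b)) => [|r rs IH] //=.
by rewrite IH /shift_down map_cat -map_comp.
Qed.

Lemma cells_cons_succ j b :
  cells (j.+1 :: b) = top_row (last_col b) j ++ (0, last_col b + j) :: shift_down (cells b).
Proof. by rewrite cells_cons /top_row -addn1 iotaD map_cat /= add0n -catA. Qed.

Lemma size_cells a : size (cells a) = sumn a.
Proof. by elim: a => [|x a IH] //; rewrite cells_cons size_cat !size_map size_iota IH. Qed.

Lemma uniq_cells a : uniq (cells a).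
Proof.
elim: a => [|x a IH] //; rewrite cells_cons cat_uniq; apply/and3P; split.
- by rewrite map_inj_uniq ?iota_uniq // => i j [] /eqP; rewrite eqn_add2l => /eqP.
- by apply/hasPn => p /mapP [q _ ->]; apply/mapP => [[j _]] [].
- by rewrite /shift_down map_inj_uniq // => [[p1 p2] [q1 q2]] [-> ->].
Qed.

Lemma cells_col_le b p : p \in cells b -> p.2 <= last_col b.
Proof.
elim: b p => [|x b IH] p //; rewrite cells_cons mem_cat => /orP [].
  move=> /mapP [j]; rewrite mem_iota add0n => /andP [_ hj] ->.
  by rewrite /= /last_col /= addnC leq_add2r -ltnS (leq_trans hj) //; case: x {hj}.
by move=> /mapP [q /IH hq ->]; rewrite /last_col /=; exact: leq_trans hq (leq_addl _ _).
Qed.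

Lemma nth_cells_top_right a g :
  0 < a -> nth (0, 0) (cells (a :: g)) a.-1 = (0, last_col (a :: g)).
Proof.
move=> ha; rewrite cells_cons nth_cat size_map size_iota prednK // leqnn.
by rewrite (nth_map 0) ?size_iota ?prednK // nth_iota ?prednK // add0n /last_col /= addnC.
Qed.

(* Letters 1' < 1 < 2' < 2 < ... are coded by 0 < 1 < 2 < 3 < ... (see [Defs]).
   [row_ok x y]: x may stand left of y in a row (an unmarked letter may repeat);
   [col_ok x y]: x may stand above y in a column (a marked letter may repeat). *)
Definition row_ok (x y : nat) : bool := (x < y) || ((x == y) && ~~ marked x).
Definition col_ok (x y : nat) : bool := (x < y) || ((x == y) && marked x).

(* Forms of the two conditions matching the clauses of [compatible] below. *)
Lemma row_okE x y : row_ok x y = (x <= y) && ~~ ((x == y) && marked x).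
Proof. by rewrite /row_ok; case: ltngtP => //= ->; case: (marked y). Qed.

Lemma col_okE x y : col_ok x y = (x <= y) && ~~ ((x == y) && ~~ marked x).
Proof. by rewrite /col_ok; case: ltngtP => //= ->; case: (marked y). Qed.

(* Both conditions are transitive, so they propagate along a row or column. *)
Lemma row_ok_trans x y z : row_ok x y -> row_ok y z -> row_ok x z.
Proof.
rewrite /row_ok => /orP [h|/andP [/eqP -> h]] /orP [h'|/andP [/eqP <- h']].
- by rewrite (ltn_trans h h').
- by rewrite h.
- by rewrite h'.
- by rewrite eqxx h orbT.
Qed.

Lemma col_ok_trans x y z : col_ok x y -> col_ok y z -> col_ok x z.
Proof.
rewrite /col_ok => /orP [h|/andP [/eqP -> h]] /orP [h'|/andP [/eqP <- h']].
- by rewrite (ltn_trans h h').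
- by rewrite h.
- by rewrite h'.
- by rewrite eqxx h orbT.
Qed.

(* The condition of [valid_filling] for two boxes p, q carrying letters x, y
   ([distinct] says whether p and q are different boxes). *)
Definition compatible (p q : nat * nat) (x y : nat) (distinct : bool) : bool :=
  [&& (p.1 == q.1) && (p.2 <= q.2) ==> (x <= y),
      (p.2 == q.2) && (p.1 <= q.1) ==> (x <= y),
      [&& distinct, p.2 == q.2, x == y & ~~ marked x] ==> false &
      [&& distinct, p.1 == q.1, x == y & marked x] ==> false].

Notation entry := ((nat * nat) * nat)%type.

Definition entries_compatible (z1 z2 : entry) : bool :=
  compatible z1.1 z2.1 z1.2 z2.2 (z1.1 != z2.1).

Definition valid_entries (Z : seq entry) : bool :=
  all (fun z1 => all (entries_compatible z1) Z) Z.

Lemma entries_compatible_refl z : entries_compatible z z.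
Proof. by rewrite /entries_compatible /compatible eqxx /= !leqnn !eqxx. Qed.

Lemma eq_valid_entries Z1 Z2 : Z1 =i Z2 -> valid_entries Z1 = valid_entries Z2.
Proof.
by move=> e; rewrite /valid_entries (eq_all_r e); apply: eq_all => z; exact: eq_all_r.
Qed.

Lemma valid_entries_cons z Z :
  valid_entries (z :: Z) =
  [&& all (entries_compatible z) Z, all (entries_compatible^~ z) Z & valid_entries Z].
Proof.
rewrite /valid_entries /= entries_compatible_refl /=.
rewrite (all_predI (entries_compatible^~ z) (fun z1 => all (entries_compatible z1) Z)).
by case: (all (entries_compatible z) Z); case: (all (entries_compatible^~ z) Z).
Qed.

Lemma valid_entries_mid A z B : valid_entries (A ++ z :: B) = valid_entries (z :: A ++ B).
Proof.
by apply: eq_valid_entries => y; rewrite !(mem_cat, in_cons); case: (y \in A); case: (y == z).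
Qed.

Lemma mem_zip_fst (A B : eqType) (s : seq A) (t : seq B) z : z \in zip s t -> z.1 \in s.
Proof.
elim: s t => [|x s IH] [|y t] //=; rewrite !in_cons => /orP [/eqP -> | /IH ->].
  by rewrite eqxx.
by rewrite orbT.
Qed.

Lemma zip_shift_down X (t : seq nat) :
  zip (shift_down X) t = [seq ((z.1.1.+1, z.1.2), z.2) | z <- zip X t].
Proof. by elim: X t => [|p X IH] [|y t] //=; rewrite IH. Qed.

Lemma valid_entries_shift_down X t :
  valid_entries (zip (shift_down X) t) = valid_entries (zip X t).
Proof.
rewrite zip_shift_down /valid_entries all_map; apply: eq_all => -[[p1 p2] x] /=.
rewrite all_map; apply: eq_all => -[[q1 q2] y] /=.
by rewrite /entries_compatible /compatible /= !eqSS !ltnS !xpair_eqE eqSS.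
Qed.

Lemma valid_col Z a b c u y : valid_entries Z -> ((a, c), u) \in Z -> ((b, c), y) \in Z ->
  a <= b -> (u == y) || col_ok u y.
Proof.
move=> /allP hv h1 h2 hab.
have := allP (hv _ h1) _ h2; have := allP (hv _ h2) _ h1.
rewrite /entries_compatible /compatible /= !eqxx hab /=.
case: (eqVneq a b) => [<-|nab].
- by rewrite leqnn /= => /andP [h3 _] /andP [h4 _]; rewrite eqn_leq h3 h4.
- rewrite !xpair_eqE (negbTE nab) /= => _ /and3P [h3 h4 _].
  by rewrite implybF in h4; rewrite col_okE h3 h4 orbT.
Qed.

Lemma valid_row Z r a b u y : valid_entries Z -> ((r, a), u) \in Z -> ((r, b), y) \in Z ->
  a <= b -> (u == y) || row_ok u y.
Proof.
move=> /allP hv h1 h2 hab.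
have := allP (hv _ h1) _ h2; have := allP (hv _ h2) _ h1.
rewrite /entries_compatible /compatible /= !eqxx hab /=.
case: (eqVneq a b) => [<-|nab].
- by rewrite leqnn /= => /andP [h3 _] /andP [h4 _]; rewrite eqn_leq h3 h4.
- rewrite !xpair_eqE (negbTE nab) eqxx andbF /= => _ /andP [h3 h4].
  by rewrite implybF in h4; rewrite row_okE h3 h4 orbT.
Qed.

Lemma valid_entries_new_row S x u Z :
  (forall z, z \in Z -> (0 < z.1.1) && (z.1.2 <= S)) -> ((1, S), u) \in Z ->
  valid_entries (((0, S), x) :: Z) = valid_entries Z && col_ok x u.
Proof.
move=> hZ hz0; rewrite valid_entries_cons.
case hv: (valid_entries Z); rewrite ?andbF ?andbT //=; apply/idP/idP.
  case/andP => /allP h1 _; have := h1 _ hz0.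
  by rewrite /entries_compatible /compatible /= eqxx /= implybF andbT col_okE.
move=> hc; have col_x (y i : nat) : ((i, S), y) \in Z -> col_ok x y.
  move=> hz; have /andP [hi _] := hZ _ hz.
  by case/orP: (valid_col hv hz0 hz hi) => [/eqP <- //|]; apply: col_ok_trans.
apply/andP; split; apply/allP => -[[i k] y] hz /=; have /andP [hi hk] := hZ _ hz;
  have i0 : (0 == i) = false by case: (i) hi.
- rewrite /entries_compatible /compatible /= xpair_eqE i0 /=.
  case: (eqVneq k S) => [ek|] //=; subst k.
  by move: (col_x _ _ hz); rewrite col_okE => /andP [-> h2]; rewrite /= implybF h2.
- rewrite /entries_compatible /compatible /= (eq_sym i 0) i0 (leqNgt i 0) hi /=.
  case: (eqVneq k S) => [ek|] /=; last by rewrite andbF.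
  subst k; rewrite andbF andbT implybF; apply: contraL (col_x _ _ hz).
  by rewrite col_okE => /and3P [_ /eqP -> ->]; rewrite eqxx andbF.
Qed.

Lemma valid_entries_extend_row T x w Z :
  (forall z, z \in Z -> z.1.2 < T) -> ((0, T.-1), w) \in Z -> 0 < T ->
  valid_entries (((0, T), x) :: Z) = valid_entries Z && row_ok w x.
Proof.
move=> hZ hz0 hT; have hTe : (T.-1 == T) = false by apply: ltn_eqF; rewrite ltn_predL.
rewrite valid_entries_cons.
case hv: (valid_entries Z); rewrite ?andbF ?andbT //=; apply/idP/idP.
  case/andP => _ /allP h1; have := h1 _ hz0.
  by rewrite /entries_compatible /compatible /= leq_pred hTe xpair_eqE hTe /= implybF row_okE.
move=> hc; have row_x (y k : nat) : ((0, k), y) \in Z -> row_ok y x.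
  move=> hz; have hk : k <= T.-1 by rewrite -ltnS prednK //; exact: hZ _ hz.
  by case/orP: (valid_row hv hz hz0 hk) => [/eqP -> //|]; move/row_ok_trans; apply.
apply/andP; split; apply/allP => -[[i k] y] hz; have hk : k < T := hZ _ hz;
  rewrite /entries_compatible /compatible /=.
- rewrite (leqNgt T k) hk (gtn_eqF hk) /= !andbF /= implybF.
  apply/negP => /and4P [_ /eqP i0 /eqP xy hm]; subst i.
  by move: (row_x _ _ hz); rewrite row_okE -xy eqxx hm andbF.
- have kT : (k == T) = false by rewrite ltn_eqF.
  rewrite kT (ltnW hk) /= !andbF /=.
  case: (eqVneq i 0) => [ei|] /=; last by rewrite andbF.
  subst i; move: (row_x _ _ hz); rewrite row_okE => /andP [-> h2] /=; rewrite implybF.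
  by apply: contra h2 => /and3P [_ -> ->].
Qed.

Fixpoint words (k n : nat) : seq (seq nat) :=
  if n is m.+1 then [seq x :: s | x <- iota 0 k, s <- words k m] else [:: [::]].

Lemma mem_words k n s : (s \in words k n) = (size s == n) && all (fun x => x < k) s.
Proof.
elim: n s => [|n IH] [|x s] //=; first by apply/allpairsPdep => -[y [t [_ _]]].
apply/allpairsPdep/idP.
  move=> [y [t [hy ht [-> ->]]]]; move: ht; rewrite IH eqSS => /andP [-> ->].
  by rewrite mem_iota in hy; rewrite andbT.
rewrite eqSS => /and3P [hn hx hs]; exists x, s; split=> //; first by rewrite mem_iota.
by rewrite IH hn hs.
Qed.

Lemma uniq_words k n : uniq (words k n).
Proof.
elim: n => [|n IH] //=; apply: allpairs_uniq => //; first exact: iota_uniq.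
by move=> [x s] [y t] _ _ [-> ->].
Qed.

Lemma size_words k n s : s \in words k n -> size s = n.
Proof. by rewrite mem_words => /andP [/eqP]. Qed.

Lemma nth_words k n s i : s \in words k n -> i < n -> nth 0 s i < k.
Proof.
by rewrite mem_words => /andP [/eqP hs ha] hi; apply: (allP ha); apply: mem_nth; rewrite hs.
Qed.

Section WordSums.
Variables (R : nmodType) (k : nat).
Implicit Types F : seq nat -> R.
Local Open Scope ring_scope.

Lemma big_words_S n F :
  \sum_(s <- words k n.+1) F s = \sum_(x <- iota 0 k) \sum_(s <- words k n) F (x :: s).
Proof. by rewrite /= big_allpairs_dep. Qed.

Lemma big_words_cat m1 m2 F :
  \sum_(s <- words k (m1 + m2)) F s =
  \sum_(s1 <- words k m1) \sum_(s2 <- words k m2) F (s1 ++ s2).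
Proof.
elim: m1 F => [|m1 IH] F; first by rewrite add0n /= big_cons big_nil addr0.
by rewrite addSn !big_words_S; apply: eq_bigr => x _; exact: IH.
Qed.

Lemma big_words_split j m F :
  \sum_(s <- words k (j + (1 + m))) F s =
  \sum_(r <- words k j) \sum_(x <- iota 0 k) \sum_(t <- words k m) F (r ++ x :: t).
Proof.
rewrite big_words_cat; apply: eq_bigr => r _.
by rewrite big_words_cat big_words_S; apply: eq_bigr => x _; rewrite /= big_cons big_nil addr0.
Qed.

End WordSums.

Definition word_of n k (T : {ffun 'I_n -> 'I_k}) : seq nat := [seq val (T i) | i <- enum 'I_n].

Lemma nth_word_of n k (T : {ffun 'I_n -> 'I_k}) (i : 'I_n) : nth 0 (word_of T) i = T i.
Proof. by rewrite /word_of (nth_map i) ?size_enum_ord // nth_ord_enum. Qed.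

Lemma size_word_of n k (T : {ffun 'I_n -> 'I_k}) : size (word_of T) = n.
Proof. by rewrite /word_of size_map size_enum_ord. Qed.

Lemma word_of_inj n k : injective (@word_of n k).
Proof.
move=> T1 T2 e; apply/ffunP => i; apply: val_inj.
by have := congr1 (fun s => nth 0 s i) e; rewrite /= !nth_word_of.
Qed.

Lemma sum_ffun_words (R : nmodType) n k (G : seq nat -> R) :
  (\sum_(T : {ffun 'I_n -> 'I_k.+1}) G (word_of T) = \sum_(s <- words k.+1 n) G s)%R.
Proof.
have hp : perm_eq [seq word_of T | T <- enum {ffun 'I_n -> 'I_k.+1}] (words k.+1 n).
  apply: uniq_perm; [by rewrite map_inj_uniq ?enum_uniq //; exact: word_of_inj | exact: uniq_words |].
  move=> s; rewrite mem_words; apply/mapP/idP.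
    move=> [T _ ->]; rewrite size_word_of eqxx /=.
    by apply/allP => x /mapP [i _ ->]; exact: ltn_ord.
  move=> /andP [/eqP hs ha].
  exists [ffun i : 'I_n => inord (nth 0 s i)]; first by rewrite mem_enum.
  apply: (@eq_from_nth _ 0); first by rewrite size_word_of.
  move=> i; rewrite hs => hi; rewrite (nth_word_of _ (Ordinal hi)) ffunE inordK //.
  by apply: (allP ha); apply: mem_nth; rewrite hs.
by rewrite -(perm_big _ hp) big_map big_enum.
Qed.

Lemma top_right_entry a g s : 0 < a -> size s = sumn (a :: g) ->
  ((0, last_col (a :: g)), nth 0 s a.-1) \in zip (cells (a :: g)) s.
Proof.
move=> ha hs; rewrite -(nth_cells_top_right g ha) -(nth_zip (0, 0) 0) ?size_cells //.
by apply: mem_nth; rewrite size_zip size_cells hs minnn /= -(prednK ha) addSn ltnS leq_addr.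
Qed.

Lemma valid_grow_row j b r x t : 0 < j -> size r = j -> size t = sumn b ->
  valid_entries (zip (cells (j.+1 :: b)) (r ++ x :: t)) =
  valid_entries (zip (cells (j :: b)) (r ++ t)) && row_ok (nth 0 r j.-1) x.
Proof.
move=> hj hr ht; have hrt : size (r ++ t) = sumn (j :: b) by rewrite size_cat hr ht.
have -> : valid_entries (zip (cells (j.+1 :: b)) (r ++ x :: t)) =
          valid_entries (((0, last_col b + j), x) :: zip (cells (j :: b)) (r ++ t)).
  rewrite cells_cons_succ zip_cat ?size_map ?size_iota ?hr // valid_entries_mid.
  by rewrite cells_cons zip_cat ?size_map ?size_iota ?hr.
apply: valid_entries_extend_row; last by rewrite addn_gt0 hj orbT.
- move=> z /mem_zip_fst /cells_col_le; rewrite /last_col /= => hz.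
  by apply: leq_ltn_trans hz _; lia.
- have := top_right_entry hj hrt; rewrite nth_cat hr ltn_predL hj.
  by rewrite /last_col /= -(prednK hj) addnS /= addnC.
Qed.

Lemma valid_new_row b0 g x t : 0 < b0 -> size t = sumn (b0 :: g) ->
  valid_entries (zip (cells (1 :: b0 :: g)) (x :: t)) =
  valid_entries (zip (cells (b0 :: g)) t) && col_ok x (nth 0 t b0.-1).
Proof.
move=> hb ht; rewrite cells_cons /top_row /= addn0 -(valid_entries_shift_down _ t).
apply: valid_entries_new_row.
- rewrite zip_shift_down => z /mapP [z' /mem_zip_fst /cells_col_le hz ->] /=.
  by rewrite hz.
- rewrite zip_shift_down; apply/mapP.
  by exists ((0, last_col (b0 :: g)), nth 0 t b0.-1); first exact: top_right_entry.
Qed.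

Local Open Scope ring_scope.

Lemma sum_select (I : eqType) (r : seq I) (w : I) (F : I -> rat) :
  uniq r -> w \in r -> \sum_(u <- r) (if u == w then F u else 0) = F w.
Proof. by move=> ur wr; rewrite (bigD1_seq w) //= eqxx big1 ?addr0 // => u /negbTE ->. Qed.

Lemma if_swap (a b : bool) (X : rat) :
  (if a then (if b then X else 0) else 0) = (if b then (if a then X else 0) else 0).
Proof. by case: a; case: b. Qed.

Lemma if_andb (a b : bool) (X : rat) :
  (if a && b then X else 0) = (if a then (if b then X else 0) else 0).
Proof. by case: a. Qed.

Lemma if_sumr (I : Type) (r : seq I) (b : bool) (F : I -> rat) :
  (if b then \sum_(i <- r) F i else 0) = \sum_(i <- r) if b then F i else 0.
Proof. by case: b; rewrite // big1. Qed.

(* Number of letters 1' or 1 (codes 0 and 1) in a word. *)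
Definition ones (s : seq nat) : nat := count (fun x => x < 2)%N s.

Lemma ones_cat_cons r x t : ones (r ++ x :: t) = (ones (r ++ t) + (x < 2))%N.
Proof. by rewrite /ones !count_cat /= addnCA addnC. Qed.

(* Weighted count of the valid fillings s of the ribbon alpha with letters
   1' < 1 < 2' < 2 whose top-right box carries the letter v, each weighted by
   phi (ones s).  The top-right box has index (head alpha - 1) in [cells alpha]. *)
Definition top_sum (phi : nat -> rat) (alpha : seq nat) (v : nat) : rat :=
  \sum_(s <- words 4 (sumn alpha))
     if nth 0%N s (head 0%N alpha).-1 == v then
       (if valid_entries (zip (cells alpha) s) then phi (ones s) else 0)
     else 0.

Lemma top_sum_single phi v : (v < 4)%N -> top_sum phi [:: 1%N] v = phi (v < 2)%N.
Proof.
move=> hv; rewrite /top_sum (_ : sumn [:: 1%N] = 1%N) // big_words_S.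
under eq_bigr => x _ do
  rewrite big_cons big_nil addr0 cells_cons /= /valid_entries /= entries_compatible_refl /=.
by rewrite (sum_select (fun x => phi ((x < 2) + 0)%N)) ?iota_uniq ?mem_iota ?addn0.
Qed.

Lemma top_sum_grow_row phi j b v : (0 < j)%N -> (v < 4)%N ->
  top_sum phi (j.+1 :: b) v =
  \sum_(u <- iota 0 4) if row_ok u v then top_sum (fun c => phi (c + (v < 2))%N) (j :: b) u else 0.
Proof.
(* Both sides are the sum of M r t over the words r filling the first j boxes of
   the top row and the words t filling the lower rows. *)
move=> hj hv; pose M (r t : seq nat) :=
  if row_ok (nth 0%N r j.-1) v then
    (if valid_entries (zip (cells (j :: b)) (r ++ t)) then phi (ones (r ++ t) + (v < 2))%N else 0)
  else 0.
transitivity (\sum_(r <- words 4 j) \sum_(t <- words 4 (sumn b)) M r t).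
  rewrite /top_sum (_ : sumn (j.+1 :: b) = j + (1 + sumn b))%N; last by rewrite /= addSnnS.
  rewrite big_words_split; apply: eq_big_seq => r /size_words hr.
  rewrite exchange_big; apply: eq_big_seq => t /size_words ht.
  change (head 0%N (j.+1 :: b)).-1 with j.
  under eq_bigr => x _ do
    rewrite nth_cat hr ltnn subnn /= (valid_grow_row _ hj hr ht) ones_cat_cons andbC if_andb.
  by rewrite (sum_select (fun x => if row_ok _ x then _ else 0)) ?iota_uniq ?mem_iota.
rewrite /top_sum; change (head 0%N (j :: b)).-1 with j.-1.
rewrite (_ : sumn (j :: b) = j + sumn b)%N //.
under [RHS]eq_bigr => u _ do rewrite big_words_cat if_sumr.
rewrite [RHS]exchange_big; apply: eq_big_seq => r hr.
under [RHS]eq_bigr => u _ do rewrite if_sumr.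
rewrite [RHS]exchange_big; apply: eq_big_seq => t _.
have hjr : (j.-1 < j)%N by rewrite ltn_predL.
under eq_bigr => u _ do rewrite if_swap eq_sym nth_cat (size_words hr) hjr.
by rewrite (sum_select (fun u => if row_ok u v then _ else 0)) ?iota_uniq // mem_iota (nth_words hr).
Qed.

Lemma top_sum_new_row phi b0 g v : (0 < b0)%N -> (v < 4)%N ->
  top_sum phi (1%N :: b0 :: g) v =
  \sum_(u <- iota 0 4) if col_ok v u then top_sum (fun c => phi (c + (v < 2))%N) (b0 :: g) u else 0.
Proof.
(* Both sides are the sum of M t over the words t filling the ribbon (b0 :: g). *)
move=> hb hv; pose M (t : seq nat) :=
  if col_ok v (nth 0%N t b0.-1) then
    (if valid_entries (zip (cells (b0 :: g)) t) then phi (ones t + (v < 2))%N else 0)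
  else 0.
transitivity (\sum_(t <- words 4 (sumn (b0 :: g))) M t).
  rewrite /top_sum (_ : sumn [:: 1, b0 & g] = (sumn (b0 :: g)).+1)%N // big_words_S.
  rewrite exchange_big; apply: eq_big_seq => t /size_words ht.
  under eq_bigr => x _ do
    rewrite [nth _ _ _]/= (valid_new_row _ hb ht) andbC if_andb (ones_cat_cons [::]).
  by rewrite (sum_select (fun x => if col_ok x _ then _ else 0)) ?iota_uniq ?mem_iota.
rewrite /top_sum; change (head 0%N (b0 :: g)).-1 with b0.-1.
under [RHS]eq_bigr => u _ do rewrite if_sumr.
rewrite [RHS]exchange_big; apply: eq_big_seq => t ht.
have hbt : (b0.-1 < sumn (b0 :: g))%N by rewrite /= -(prednK hb) addSn ltnS leq_addr.
under eq_bigr => u _ do rewrite if_swap eq_sym.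
by rewrite (sum_select (fun u => if col_ok v u then _ else 0)) ?iota_uniq // mem_iota (nth_words ht).
Qed.

Definition sgn (c : nat) : rat := (-1) ^+ c.
Definition test_weight (c : nat) : rat := c%:R * (-1) ^+ c.

Lemma eq_top_sum p1 p2 a v : p1 =1 p2 -> top_sum p1 a v = top_sum p2 a v.
Proof. by move=> e; apply: eq_bigr => s _; rewrite e. Qed.

Lemma top_sum_lin k1 k2 p1 p2 a v :
  top_sum (fun c => k1 * p1 c + k2 * p2 c) a v = k1 * top_sum p1 a v + k2 * top_sum p2 a v.
Proof.
rewrite /top_sum !mulr_sumr -[RHS]big_split /=; apply: eq_bigr => s _.
by case: ifP => _; [case: ifP => _|]; rewrite ?mulr0 ?addr0.
Qed.

Lemma top_sum_sgn_shift a u (d : nat) :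
  top_sum (fun c => sgn (c + d)) a u = sgn d * top_sum sgn a u.
Proof.
rewrite (@eq_top_sum _ (fun c => sgn d * sgn c + 0 * sgn c)) ?top_sum_lin ?mul0r ?addr0 //.
by move=> c /=; rewrite /sgn exprD mul0r addr0 mulrC.
Qed.

Lemma top_sum_test_shift a u (d : nat) :
  top_sum (fun c => test_weight (c + d)) a u =
  sgn d * (top_sum test_weight a u + d%:R * top_sum sgn a u).
Proof.
rewrite (@eq_top_sum _ (fun c => sgn d * test_weight c + (sgn d * d%:R) * sgn c)) ?top_sum_lin.
  by rewrite mulrDr mulrA.
by move=> c; rewrite /test_weight /sgn natrD exprD; ring.
Qed.

(* Signed counts of valid fillings with top-right letter in {1', 1}, resp. in
   {2', 2}, and the test functional summed over all top-right letters. *)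
Definition signed1 a := top_sum sgn a 0 + top_sum sgn a 1.
Definition signed2 a := top_sum sgn a 2 + top_sum sgn a 3.
Definition weighted a :=
  top_sum test_weight a 0 + top_sum test_weight a 1 + top_sum test_weight a 2 +
  top_sum test_weight a 3.

Lemma weighted_single : [/\ signed1 [:: 1%N] = -2, signed2 [:: 1%N] = 2 & weighted [:: 1%N] = -2].
Proof. by rewrite /signed1 /signed2 /weighted !top_sum_single // /sgn /test_weight /=; split; ring. Qed.

Lemma weighted_grow_row j b : (0 < j)%N ->
  [/\ signed1 (j.+1 :: b) = - signed1 (j :: b),
      signed2 (j.+1 :: b) = 2 * signed1 (j :: b) + signed2 (j :: b) &
      weighted (j.+1 :: b) = weighted (j :: b) - signed1 (j :: b)].
Proof.
move=> hj; rewrite /signed1 /signed2 /weighted !top_sum_grow_row //.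
rewrite !big_cons !big_nil /row_ok /marked /= !top_sum_sgn_shift !top_sum_test_shift /sgn /=.
by split; ring.
Qed.

Lemma weighted_new_row b0 g : (0 < b0)%N ->
  [/\ signed1 [:: 1%N, b0 & g] = - signed1 (b0 :: g) - 2 * signed2 (b0 :: g),
      signed2 [:: 1%N, b0 & g] = signed2 (b0 :: g) &
      weighted [:: 1%N, b0 & g] = - weighted (b0 :: g) - signed1 (b0 :: g) - 2 * signed2 (b0 :: g)].
Proof.
move=> hb; rewrite /signed1 /signed2 /weighted !top_sum_new_row //.
rewrite !big_cons !big_nil /col_ok /marked /= !top_sum_sgn_shift !top_sum_test_shift /sgn /=.
by split; ring.
Qed.

Lemma size_le_sumn a : composition a -> (size a <= sumn a)%N.
Proof. by elim: a => [|x a IH] //= /andP [hx ha]; rewrite -add1n leq_add // IH. Qed.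

Definition closed_forms (a : seq nat) : Prop :=
  [/\ signed1 a = -2 * (-1) ^+ (sumn a - size a)%N, signed2 a = - signed1 a
    & weighted a = - (-1) ^+ (size a).-1 - (-1) ^+ (sumn a - size a)%N].

Lemma closed_forms_grow_row j b : (0 < j)%N -> composition b ->
  closed_forms (j :: b) -> closed_forms (j.+1 :: b).
Proof.
move=> hj hb [e1 e2 e3]; have [g1 g2 g3] := weighted_grow_row b hj; rewrite /closed_forms.
have -> : (sumn (j.+1 :: b) - size (j.+1 :: b) = (sumn (j :: b) - size (j :: b)).+1)%N.
  by have := size_le_sumn hb; rewrite /=; lia.
by rewrite g1 g2 g3 e2 e1 e3 /= exprS; split; ring.
Qed.

Lemma closed_forms_new_row b0 g : (0 < b0)%N -> composition (b0 :: g) ->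
  closed_forms (b0 :: g) -> closed_forms [:: 1%N, b0 & g].
Proof.
move=> hb hc [e1 e2 e3]; have [n1 n2 n3] := weighted_new_row g hb; rewrite /closed_forms.
have -> : (sumn [:: 1%N, b0 & g] - size [:: 1%N, b0 & g] = sumn (b0 :: g) - size (b0 :: g))%N.
  by have := size_le_sumn hc; rewrite /=; lia.
by rewrite n1 n2 n3 e2 e1 e3 [(size _).-1]/= exprS; split; ring.
Qed.

(* Every nonempty ribbon is built from one box by the two operations above. *)
Lemma closed_forms_ribbon a0 b : (0 < a0)%N -> composition b -> closed_forms (a0 :: b).
Proof.
elim: b a0 => [|b0 g IH] a0 ha0 hb.
  elim: a0 ha0 => [|[|j] IHj] // _; last by apply: closed_forms_grow_row => //; exact: IHj.
  by have [x1 y1 s1] := weighted_single; rewrite /closed_forms x1 y1 s1 /=; split; ring.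
move: (hb) => /= /andP [hb0 hg]; have Pb := IH b0 hb0 hg.
elim: a0 ha0 => [|[|j] IHj] // _; first exact: closed_forms_new_row.
by apply: closed_forms_grow_row => //; exact: IHj.
Qed.

Lemma weighted_even_length alpha : composition alpha -> odd (sumn alpha) ->
  ~~ odd (size alpha) -> weighted alpha = 2.
Proof.
case: alpha => [|a0 b] //= /andP [ha hb] hodd hev.
have [_ _ ->] := closed_forms_ribbon ha hb.
have odd_b : odd (size b) by rewrite negbK in hev.
have odd_diff : odd (a0 + sumn b - (size b).+1).
  by rewrite oddB ?hodd /= ?odd_b // -add1n leq_add // size_le_sumn.
have sign_b : (-1) ^+ size b = -1 :> rat by rewrite -signr_odd odd_b.
have sign_diff : (-1) ^+ (a0 + sumn b - (size b).+1) = -1 :> rat by rewrite -signr_odd odd_diff.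
by rewrite /= sign_b sign_diff; lra.
Qed.

Lemma sum_ord2 (F : 'I_2 -> rat) : \sum_(k < 2) F k = F ord0 + F ord_max.
Proof. by rewrite big_ord_recl big_ord1; congr (_ + F _); apply: val_inj. Qed.

(* Power sums in two variables.  The monomials of p_lam(x1, x2) are indexed by
   the maps f sending each part to a variable; [mass1 f] is the exponent of x1. *)
Section PowerSumInTwoVariables.
Variable lam : seq nat.

Definition mass1 (f : {ffun 'I_(size lam) -> 'I_2}) : nat :=
  (\sum_(i | f i == ord0) nth 0 lam i)%N.

Let sgn_part (j : 'I_(size lam)) : rat := (-1) ^+ nth 0%N lam j.

Lemma sum_maps_part (i : 'I_(size lam)) :
  \sum_(f : {ffun 'I_(size lam) -> 'I_2}) (if f i == ord0 then (nth 0%N lam i)%:R else 0) *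
       \prod_j (if f j == ord0 then sgn_part j else 1)
  = (nth 0%N lam i)%:R * sgn_part i * \prod_(j | j != i) (sgn_part j + 1).
Proof.
pose h (j : 'I_(size lam)) (k : 'I_2) : rat :=
  if j == i then (if k == ord0 then (nth 0%N lam i)%:R * sgn_part i else 0)
  else (if k == ord0 then sgn_part j else 1).
transitivity (\sum_(f : {ffun 'I_(size lam) -> 'I_2}) \prod_j h j (f j)).
  apply: eq_bigr => f _; rewrite (bigD1 i) //= [RHS](bigD1 i) //= /h eqxx mulrA.
  congr (_ * _); last by apply: eq_bigr => j /negbTE ->.
  by case: (f i == ord0); rewrite ?mul0r ?mulr0.
rewrite -bigA_distr_bigA (bigD1 i) //= sum_ord2 /h eqxx /= addr0.
by congr (_ * _); apply: eq_bigr => j /negbTE ->; rewrite sum_ord2 /= addrC.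
Qed.

(* If |lam| is odd, sum_f m_f (-1)^(m_f) = - sum_i lam_i prod_(j <> i) (1 + (-1)^(lam_j)) <= 0,
   where m_f = mass1 f. *)
Lemma sum_maps_test_nonpos : odd (\sum_(i < size lam) nth 0 lam i)%N ->
  \sum_(f : {ffun 'I_(size lam) -> 'I_2}) test_weight (mass1 f) <= 0.
Proof.
move=> hodd.
have expand (f : {ffun 'I_(size lam) -> 'I_2}) : test_weight (mass1 f) =
    \sum_i (if f i == ord0 then (nth 0%N lam i)%:R else 0) *
           \prod_j (if f j == ord0 then sgn_part j else 1).
  rewrite /test_weight /mass1 natr_sum big_mkcond /= -mulr_suml; congr (_ * _).
  by rewrite -prodrXr big_mkcond.
rewrite (eq_bigr _ (fun f _ => expand f)) exchange_big /=.
apply: sumr_le0 => i _; rewrite sum_maps_part.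
have sign_sq (n : nat) : (-1) ^+ n * (-1) ^+ n = 1 :> rat by rewrite -expr2 sqrr_sign.
have split_prod : \prod_(j | j != i) (sgn_part j + 1) =
    \prod_(j | j != i) sgn_part j * \prod_(j | j != i) (sgn_part j + 1).
  by rewrite -big_split /=; apply: eq_bigr => j _; rewrite mulrDr sign_sq mulr1 addrC.
have total_sign : sgn_part i * \prod_(j | j != i) sgn_part j = -1.
  transitivity (\prod_j sgn_part j); first by rewrite [RHS](bigD1 i).
  by rewrite /sgn_part prodrXr -signr_odd hodd expr1.
rewrite split_prod mulrA -(mulrA _ (sgn_part i)) total_sign mulrN1 mulNr oppr_le0.
apply: mulr_ge0; first exact: ler0n.
apply: prodr_ge0 => j _; rewrite /sgn_part -signr_odd.
by case: (odd _); rewrite ?expr0 ?expr1 //; lra.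
Qed.

End PowerSumInTwoVariables.

Definition exps2 (n a : nat) : 'I_2 -> nat := fun k => if (k : nat) == 0%N then a else (n - a)%N.

Definition test_functional (n : nat) (F : ('I_2 -> nat) -> nat) : rat :=
  \sum_(a < n.+1) test_weight a * (F (exps2 n a))%:R.

Lemma card_set_sum (T : finType) (Q : pred T) :
  (#|[set x | Q x]|)%:R = \sum_x (if Q x then 1 else 0) :> rat.
Proof. by rewrite -sum1dep_card natr_sum big_mkcond /=; apply: eq_bigr => x _; case: (Q x). Qed.

Lemma sum_select_ord n (x : nat) (F : nat -> rat) : (x <= n)%N ->
  \sum_(a < n.+1) F a * (if x == a then 1 else 0) = F x.
Proof.
move=> hx; rewrite (bigD1 (inord x)) //= inordK ?ltnS // eqxx mulr1 big1 ?addr0 //.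
move=> a ha; rewrite ifN ?mulr0 //; apply: contra ha => /eqP e.
by apply/eqP/val_inj; rewrite /= inordK ?ltnS // e.
Qed.

Lemma forall_ord2 (P : 'I_2 -> bool) : [forall j, P j] = P ord0 && P ord_max.
Proof.
apply/forallP/andP => [h|[h0 h1] -[[|[|//]] hj]]; first by split.
- by rewrite (_ : Ordinal hj = ord0) //; apply: val_inj.
- by rewrite (_ : Ordinal hj = ord_max) //; apply: val_inj.
Qed.

Lemma test_functional_card n (T : finType) (Q : pred T) (stat : T -> 'I_2 -> nat) :
  (forall x, Q x -> stat x ord0 + stat x ord_max = n)%N ->
  test_functional n (fun c => #|[set x | Q x && [forall k, stat x k == c k]]|) =
  \sum_(x | Q x) test_weight (stat x ord0).
Proof.
move=> hstat; rewrite /test_functional.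
under eq_bigr => a _ do rewrite card_set_sum mulr_sumr.
rewrite exchange_big [RHS]big_mkcond; apply: eq_bigr => x _.
case: (boolP (Q x)) => hQ /=; last by rewrite big1 // => a _; rewrite mulr0.
have hx : (stat x ord0 <= n)%N by rewrite -(hstat x hQ) leq_addr.
rewrite -(sum_select_ord _ hx); apply: eq_bigr => a _; rewrite forall_ord2 /exps2 /=.
by case: (eqVneq (stat x ord0) a) => [<-|] //=; rewrite -(hstat x hQ) addKn eqxx.
Qed.

Lemma test_power_sum lam n : sumn lam = n -> odd n -> test_functional n (@p_coeff lam 2) <= 0.
Proof.
move=> hs hodd; have sum_parts : (\sum_(i < size lam) nth 0 lam i)%N = n.
  by rewrite -hs sumnE (big_nth 0) big_mkord.
rewrite /p_coeff (test_functional_card (Q := predT)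
  (stat := fun (f : {ffun 'I_(size lam) -> 'I_2}) k => \sum_(i | f i == k) nth 0 lam i)%N) /=.
  by apply: sum_maps_test_nonpos; rewrite sum_parts.
move=> f _; rewrite -sum_parts [RHS](bigID (fun i => f i == ord0)) /=; congr (_ + _).
by apply: eq_bigl => i; case: (f i) => -[|[|]].
Qed.

Lemma valid_entries_zip (X : seq (nat * nat)) k (T : {ffun 'I_(size X) -> 'I_k}) : uniq X ->
  valid_entries (zip X (word_of T)) =
  [forall i : 'I_(size X), forall j : 'I_(size X),
     compatible (nth (0%N, 0%N) X i) (nth (0%N, 0%N) X j) (T i) (T j) (i != j)].
Proof.
move=> hu; have hz : size (zip X (word_of T)) = size X by rewrite size_zip size_word_of minnn.
apply/allP/forallP.
- move=> H i; apply/forallP => j.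
  have hz1 : nth ((0, 0), 0)%N (zip X (word_of T)) i \in zip X (word_of T) by rewrite mem_nth ?hz.
  have hz2 : nth ((0, 0), 0)%N (zip X (word_of T)) j \in zip X (word_of T) by rewrite mem_nth ?hz.
  have := allP (H _ hz1) _ hz2; rewrite /entries_compatible !nth_zip ?size_word_of //= !nth_word_of.
  by rewrite nth_uniq.
- move=> H z1 hz1; apply/allP => z2 hz2.
  have [i hi <-] := nthP ((0, 0), 0)%N hz1; have [j hj <-] := nthP ((0, 0), 0)%N hz2.
  rewrite hz in hi hj; have := forallP (H (Ordinal hi)) (Ordinal hj).
  rewrite /entries_compatible !nth_zip ?size_word_of //=.
  by rewrite (nth_word_of T (Ordinal hi)) (nth_word_of T (Ordinal hj)) nth_uniq.
Qed.

Lemma valid_filling_entries alpha N (T : filling alpha N) :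
  valid_filling T = valid_entries (zip (cells alpha) (word_of T)).
Proof. by rewrite valid_entries_zip ?uniq_cells. Qed.

Lemma card_set_count n (P : pred 'I_n) : #|[set i | P i]| = count P (enum 'I_n).
Proof.
rewrite (@eq_card _ _ [pred i | P i]); last by move=> i; rewrite inE.
by rewrite cardE /enum_mem size_filter filter_predT.
Qed.

Lemma content_ord0 alpha (T : filling alpha 2) : content T ord0 = ones (word_of T).
Proof.
rewrite /content card_set_count /ones /word_of count_map; apply: eq_count => i /=.
by case: (T i) => -[|[|x]].
Qed.

Lemma content_sum alpha (T : filling alpha 2) :
  (content T ord0 + content T ord_max)%N = sumn alpha.
Proof.
rewrite /content !card_set_count -(size_cells alpha) -[X in _ = X](size_enum_ord).
rewrite -(count_predC (fun i => (T i)./2 == 0)%N); congr (_ + _)%N.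
by apply: eq_count => i /=; case: (T i) => -[|[|[|[|]]]].
Qed.

Lemma weighted_sum a : weighted a = \sum_(v <- iota 0 4) top_sum test_weight a v.
Proof. by rewrite /weighted !big_cons big_nil addr0 !addrA. Qed.

Lemma test_ribbon alpha : composition alpha -> alpha != [::] ->
  test_functional (sumn alpha) (@rD_coeff alpha 2) = weighted alpha.
Proof.
move=> hc hne; rewrite /rD_coeff (test_functional_card (Q := @valid_filling alpha 2)
  (stat := @content alpha 2)); last by move=> T _; exact: content_sum.
rewrite big_mkcond /=.
under eq_bigr => T _ do rewrite valid_filling_entries content_ord0.
rewrite (@sum_ffun_words _ (size (cells alpha)) 3
  (fun s => if valid_entries (zip (cells alpha) s) then test_weight (ones s) else 0)) size_cells.
rewrite weighted_sum /top_sum exchange_big; apply: eq_big_seq => s hs.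
under eq_bigr => v _ do rewrite eq_sym.
rewrite (sum_select (fun _ => if valid_entries _ then _ else 0)) ?iota_uniq // mem_iota.
apply: (nth_words hs); case: (alpha) hc hne => [|a0 b] //= /andP [ha _] _.
by apply: leq_trans (leq_addr _ _); rewrite ltn_predL.
Qed.

Lemma p_positive_test_nonpos n (F : forall N : nat, ('I_N -> nat) -> nat) :
  odd n -> p_positive n F -> test_functional n (F 2%N) <= 0.
Proof.
move=> hodd [coef [hpos hF]].
have sumn_part (t : n.-tuple 'I_n.+1) : is_part t -> sumn (part_of t) = n.
  move=> /andP [_ /eqP ht]; apply: etrans ht; rewrite /part_of.
  by elim: (map val t) => [|x s IH] //=; case: x => [|x] //=; rewrite IH.
have -> : test_functional n (F 2%N) =
    \sum_(t | is_part t) coef t * test_functional n (@p_coeff (part_of t) 2).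
  rewrite /test_functional; under eq_bigr => a _ do rewrite hF mulr_sumr.
  rewrite exchange_big; apply: eq_bigr => t _; rewrite mulr_sumr; apply: eq_bigr => a _.
  by rewrite mulrCA.
apply: sumr_le0 => t ht; apply: mulr_ge0_le0; first exact: hpos.
exact: test_power_sum (sumn_part t ht) hodd.
Qed.

Local Close Scope ring_scope.

Theorem mainTheorem16 (alpha : seq nat) :
  composition alpha ->
  odd (sumn alpha) ->
  ~ in_B alpha ->
  ~~ odd (size alpha) ->
  ~ p_positive (sumn alpha) (rD_coeff alpha).
Proof.
move=> hc hodd _ hev hpos; have hne : alpha != [::] by case: (alpha) hodd.
have := p_positive_test_nonpos hodd hpos.
by rewrite test_ribbon // weighted_even_length.
Qed.
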